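(* A morphism $m:A\to Z$ of $\mathbf{iRel}$ is a monomorphism in $\mathbf{iRel}$ if and only if it is total, i.e. $m(a)\neq\emptyset$ for every $a\in A$.
   Context: A binary relation $R:A\to Z$ (i.e. $R\subseteq A\times Z$; write $aRz$ for $\langle a,z\rangle\in R$) is injective if $aRz$ and $a'Rz$ imply $a=a'$. $\mathbf{iRel}$ is the category of sets and injective relations, with relational composition. For $a\in A$, $m(a)=\{z\in Z: amz\}$. *)

(* The category iRel: objects are sets (Rocq types),
   morphisms A -> Z are relations R ⊆ A × Z, i.e. R : A -> Z -> Prop. *)

Definition rel_eq {A Z : Type} (R S : A -> Z -> Prop) : Prop :=
  forall a z, R a z <-> S a z.

Definition rel_comp {X A Z : Type} (m : A -> Z -> Prop) (f : X -> A -> Prop)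
  : X -> Z -> Prop :=
  fun x z => exists a, f x a /\ m a z.

Definition injective_rel {A Z : Type} (R : A -> Z -> Prop) : Prop :=
  forall a a' z, R a z -> R a' z -> a = a'.

Definition iRel_mono {A Z : Type} (m : A -> Z -> Prop) : Prop :=
  forall (X : Type) (f g : X -> A -> Prop),
    injective_rel f -> injective_rel g ->
    rel_eq (rel_comp m f) (rel_comp m g) -> rel_eq f g.

Definition total_rel {A Z : Type} (m : A -> Z -> Prop) : Prop :=
  forall a, exists z, m a z.

From Stdlib Require Import Classical.

(* Totality suffices: if m ∘ f = m ∘ g and x f a, pick z with a m z; then
   x (m ∘ g) z, so x g a' and a' m z for some a', and injectivity of m forces
   a' = a.  This direction does not use injectivity of f or g.

   Totality is necessary: if m(a) is empty, the relation "the one point of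
   unit is related to a" and the empty relation unit -> A are both injective
   and both become empty after composing with m, yet they differ.  Hence a
   monomorphism cannot have an empty fibre m(a); classically it is total.
   This direction does not use injectivity of m. *)

Lemma rel_comp_cancel_at {X A Z : Type} (m : A -> Z -> Prop)
    (f g : X -> A -> Prop) (x : X) (a : A) (z : Z) :
  injective_rel m -> m a z ->
  (forall z', rel_comp m f x z' -> rel_comp m g x z') ->
  f x a -> g x a.
Proof.
  intros hm Hz Hcomp Hf.
  destruct (Hcomp z (ex_intro _ a (conj Hf Hz))) as [a' [Hg Hz']].
  rewrite (hm a a' z Hz Hz'); exact Hg.
Qed.

Lemma total_injective_mono {A Z : Type} (m : A -> Z -> Prop) :
  injective_rel m -> total_rel m -> iRel_mono m.
Proof.
  intros hm Ht X f g _ _ Heq x a.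
  destruct (Ht a) as [z Hz].
  split; apply (rel_comp_cancel_at m _ _ x a z hm Hz); intro z'; apply Heq.
Qed.

Definition point_rel {A : Type} (a : A) : unit -> A -> Prop :=
  fun _ b => b = a.

Definition empty_rel {X A : Type} : X -> A -> Prop :=
  fun _ _ => False.

Lemma point_rel_injective {A : Type} (a : A) : injective_rel (point_rel a).
Proof. intros [] [] z _ _; reflexivity. Qed.

Lemma empty_rel_injective {X A : Type} : injective_rel (@empty_rel X A).
Proof. intros x x' a []. Qed.

Lemma comp_point_empty_fibre {A Z : Type} (m : A -> Z -> Prop) (a : A) :
  (forall z, ~ m a z) ->
  rel_eq (rel_comp m (point_rel a)) (rel_comp m (@empty_rel unit A)).
Proof.
  intros Hno x z; split.
  - intros [b [-> Hz]]; destruct (Hno z Hz).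
  - intros [b [[] _]].
Qed.

Lemma mono_total {A Z : Type} (m : A -> Z -> Prop) :
  iRel_mono m -> total_rel m.
Proof.
  intros Hmono a.
  apply NNPP; intro Hn.
  assert (Hno : forall z, ~ m a z) by (intros z Hz; apply Hn; exists z; exact Hz).
  assert (Heq : rel_eq (point_rel a) (@empty_rel unit A)).
  { apply Hmono.
    - apply point_rel_injective.
    - apply empty_rel_injective.
    - exact (comp_point_empty_fibre m a Hno). }
  exact (proj1 (Heq tt a) eq_refl).
Qed.

Theorem mainTheorem2 (A Z : Type) (m : A -> Z -> Prop) (hm : injective_rel m) :
  iRel_mono m <-> total_rel m.
Proof.
  split.
  - apply mono_total.
  - apply total_injective_mono, hm.
Qed.
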